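(* For $n\ge1$ the coefficients satisfy the hierarchy $$l_{n1}=nF'',\qquad l_{n2}=\sum_{j=1}^{n-1}j\,\frac{d^2}{dt^2}\log l_{n-j,1},\qquad l_{np}=\sum_{j=1}^{n-1}j\,\frac{d^2}{dt^2}m_{n-j,p-2}\quad(p\ge3).$$ Consequently $$l_{n2}=\tfrac12 n(n-1)\,\frac{F^{(2)}F^{(4)}-(F^{(3)})^2}{(F^{(2)})^2},\qquad l_{n3}=\tfrac1{12}n(n-1)(n-2)\,\frac{d^2}{dt^2}\Big(\frac{F^{(2)}F^{(4)}-(F^{(3)})^2}{(F^{(2)})^3}\Big).$$
   Context: Let $F$ be $C^\infty$ on an open interval $J$ with $F''>0$, and let $L_n(t,N)$ be defined by $L_0=\exp(NF(t))$ and, for $n\ge1$, $$L_n(t,N)=\frac1N\sum_{j=1}^n\frac jN\,\partial_t^2\log L_{n-j}(t,N).$$ For $n\ge1$, expand $L_n(t,N)=\sum_{p\ge1}l_{np}(t)N^{-p}$ in powers of $1/N$. Define $m_{np}$ by $$\sum_{p\ge1}m_{np}N^{-p}=\log\Big(1+\sum_{p\ge1}(l_{n,p+1}/l_{n1})N^{-p}\Big).$$ *)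

From Stdlib Require Import Reals.
From Coquelicot Require Import Coquelicot.
Open Scope R_scope.

(* Formal power series in eps = 1/N whose coefficients are functions of t:
   a p t = coefficient of eps^p = N^{-p}. *)
Definition fps := nat -> R -> R.

Definition fps_zero : fps := fun _ _ => 0.
Definition fps_one : fps := fun p _ => if Nat.eqb p 0 then 1 else 0.

Definition fps_mul (a b : fps) : fps :=
  fun p t => sum_f_R0 (fun i => a i t * b (p - i)%nat t) p.

Fixpoint fps_pow (a : fps) (k : nat) : fps :=
  match k with
  | O => fps_one
  | S k' => fps_mul a (fps_pow a k')
  end.

Definition fps_D (a : fps) : fps := fun p t => Derive (a p) t.

(* Inverse of a series with invertible constant term a0:
   1/a = a0^{-1} * sum_k W^k with W = -(a - a0)/a0 (geometric series;
   W^k has valuation >= k, so the truncation k <= p is exact). *)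
Definition fps_inv (a : fps) : fps :=
  let W : fps := fun p t => if Nat.eqb p 0 then 0 else - a p t / a 0%nat t in
  fun p t => / a 0%nat t * sum_f_R0 (fun k => fps_pow W k p t) p.

Definition fps_log1p (A : fps) : fps :=
  fun p t => sum_f_R0 (fun k => match k with
                                | O => 0
                                | S k' => (-1) ^ k' / INR k * fps_pow A k p t
                                end) p.

(* For L = sum_{p>=1} l_p eps^p (valuation 1, l_1 invertible), the formal
   d^2/dt^2 log L, computed as d/dt (dL/dt / L); the common factor eps
   (independent of t) cancels in the quotient, so we divide the shifted
   series S = L/eps = sum_p l_{p+1} eps^p. *)
Definition fps_DDlog (L : fps) : fps :=
  let Sh : fps := fun p => L (S p) in
  fps_D (fps_mul (fps_D Sh) (fps_inv Sh)).

(* One step of the recursion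
     L_n = (1/N) sum_{j=1}^n (j/N) d_t^2 log L_{n-j},
   given the history h k = L_k for 1 <= k <= n-1.
   The j = n term uses d_t^2 log L_0 = d_t^2 (N F) = N F'', giving n F'' eps.
   The terms 1 <= j <= n-1 contribute j eps^2 (d_t^2 log L_{n-j}).
   (The j = 0 summand below is multiplied by INR 0 = 0.) *)
Definition L_step (F : R -> R) (n : nat) (h : nat -> fps) : fps :=
  fun p t =>
    (if Nat.eqb p 1 then INR n * Derive_n F 2 t else 0)
    + sum_f_R0 (fun j => INR j *
                  match p with
                  | S (S q) => fps_DDlog (h (n - j)%nat) q t
                  | _ => 0
                  end) (n - 1).

(* L_hist F n k = L_k (as a series in 1/N) for 1 <= k <= n. *)
Fixpoint L_hist (F : R -> R) (n : nat) : nat -> fps :=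
  match n with
  | O => fun _ => fps_zero
  | S n' => let h := L_hist F n' in
            fun k => if Nat.leb k n' then h k else L_step F (S n') h
  end.

Definition L_ser (F : R -> R) (n : nat) : fps := L_hist F n n.

Definition l_coef (F : R -> R) (n p : nat) (t : R) : R := L_ser F n p t.

Definition m_coef (F : R -> R) (n p : nat) (t : R) : R :=
  fps_log1p (fun q s => if Nat.eqb q 0 then 0
                        else l_coef F n (S q) s / l_coef F n 1 s) p t.

From Stdlib Require Import Reals Lra Lia.
From Coquelicot Require Import Coquelicot.
Open Scope R_scope.

(* Write L_k = eps l_{k1} (1 + A_k) with A_k = sum_{p>=1} (l_{k,p+1}/l_{k1}) eps^p, eps = 1/N.
   Then d^2/dt^2 log L_k = (log l_{k1})'' + (log (1 + A_k))'', so the recursion reads off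
   l_{n1} = n F'', l_{n2} = sum_j j (log l_{n-j,1})'' and l_{np} = sum_j j m_{n-j,p-2}''.
   Since l_{k1} = k F'', (log l_{k1})'' = (log F'')'' does not depend on k, which gives
   l_{n2} = n(n-1)/2 (log F'')''; then m_{k1} = l_{k2}/l_{k1} = (k-1)/2 (log F'')''/F'',
   and summing j (n-j-1)/2 over j gives the cubic factor of l_{n3}.
   Formally, everything rests on the identity (S'/S)_q = ((log (1 + A))')_q in positive
   degrees q for the series quotient defined by the geometric series, plus smoothness of
   all coefficients on the interval, which keeps every derivative meaningful. *)

Lemma sum_f_R0_shift (f : nat -> R) N :
  sum_f_R0 f (S N) = f 0%nat + sum_f_R0 (fun i => f (S i)) N.
Proof. now rewrite decomp_sum by lia. Qed.

Lemma sum_f_R0_scal_l (f : nat -> R) c N :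
  sum_f_R0 (fun i => c * f i) N = c * sum_f_R0 f N.
Proof. induction N; simpl; [|rewrite IHN]; ring. Qed.

Lemma sum_f_R0_scal_r (f : nat -> R) c N :
  sum_f_R0 (fun i => f i * c) N = sum_f_R0 f N * c.
Proof. induction N; simpl; [|rewrite IHN]; ring. Qed.

Lemma sum_f_R0_swap (f : nat -> nat -> R) N M :
  sum_f_R0 (fun i => sum_f_R0 (f i) N) M =
  sum_f_R0 (fun k => sum_f_R0 (fun i => f i k) M) N.
Proof.
  induction M; simpl.
  - reflexivity.
  - rewrite IHM, <- plus_sum. reflexivity.
Qed.

Lemma sum_f_R0_rev (f : nat -> R) N :
  sum_f_R0 f N = sum_f_R0 (fun i => f (N - i)%nat) N.
Proof.
  induction N; [reflexivity|].
  rewrite (sum_f_R0_shift (fun i => f (S N - i)%nat)), tech5, IHN.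
  rewrite Nat.sub_0_r. simpl. ring.
Qed.

Lemma sum_f_R0_triangle_reindex (g : nat -> nat -> R) N :
  sum_f_R0 (fun m => sum_f_R0 (fun i => g i m) m) N =
  sum_f_R0 (fun i => sum_f_R0 (fun k => g i (i + k)%nat) (N - i)) N.
Proof.
  induction N; [reflexivity|].
  rewrite !tech5, IHN, Nat.sub_diag; simpl (sum_f_R0 _ 0).
  rewrite Nat.add_0_r, <- Rplus_assoc, <- plus_sum. f_equal.
  apply sum_eq; intros i Hi.
  replace (S N - i)%nat with (S (N - i)) by lia. simpl.
  now replace (i + S (N - i))%nat with (S N) by lia.
Qed.

Lemma sum_f_R0_telescope (f : nat -> R) N :
  sum_f_R0 (fun k => f k - f (S k)) N = f 0%nat - f (S N).
Proof. induction N; simpl; [|rewrite IHN]; ring. Qed.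

Lemma sum_f_R0_extend (f : nat -> R) m N : (m <= N)%nat ->
  (forall k, (m < k <= N)%nat -> f k = 0) -> sum_f_R0 f m = sum_f_R0 f N.
Proof.
  intros Hm Hz. induction N.
  - now replace m with 0%nat by lia.
  - destruct (Nat.eq_dec m (S N)) as [->|Hne]; [reflexivity|].
    rewrite tech5, <- IHN, Hz by (try lia; intros; apply Hz; lia). ring.
Qed.

Lemma fps_mul_ext (a a' b b' : fps) p y :
  (forall i, (i <= p)%nat -> a i y = a' i y) ->
  (forall i, (i <= p)%nat -> b i y = b' i y) ->
  fps_mul a b p y = fps_mul a' b' p y.
Proof.
  intros Ha Hb. apply sum_eq; intros i Hi. rewrite Ha, Hb by lia. reflexivity.
Qed.

Lemma fps_mul_comm (a b : fps) p y : fps_mul a b p y = fps_mul b a p y.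
Proof.
  unfold fps_mul. rewrite sum_f_R0_rev. apply sum_eq; intros i Hi.
  replace (p - (p - i))%nat with i by lia. ring.
Qed.

Lemma fps_mul_assoc (a b c : fps) p y :
  fps_mul a (fps_mul b c) p y = fps_mul (fps_mul a b) c p y.
Proof.
  unfold fps_mul.
  transitivity (sum_f_R0 (fun m => sum_f_R0
      (fun i => a i y * b (m - i)%nat y * c (p - m)%nat y) m) p).
  - rewrite sum_f_R0_triangle_reindex. apply sum_eq; intros i Hi.
    rewrite <- sum_f_R0_scal_l. apply sum_eq; intros k Hk.
    replace (i + k - i)%nat with k by lia. rewrite Nat.sub_add_distr. ring.
  - apply sum_eq; intros m _. apply sum_f_R0_scal_r.
Qed.

Lemma fps_mul_left_comm (a b c : fps) p y :
  fps_mul a (fps_mul b c) p y = fps_mul b (fps_mul a c) p y.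
Proof.
  rewrite !fps_mul_assoc.
  apply fps_mul_ext; intros; [apply fps_mul_comm | reflexivity].
Qed.

Lemma fps_mul_one_l (b : fps) p y : fps_mul fps_one b p y = b p y.
Proof.
  unfold fps_mul, fps_one. destruct p; [simpl; ring|].
  rewrite sum_f_R0_shift, sum_eq_R0; [simpl; ring|].
  intros i _. simpl. ring.
Qed.

Lemma fps_mul_scal_r (a b : fps) c p y :
  fps_mul a (fun q z => c * b q z) p y = c * fps_mul a b p y.
Proof. unfold fps_mul. rewrite <- sum_f_R0_scal_l. apply sum_eq; intros; ring. Qed.

Lemma fps_mul_sum_r (a : fps) (B : nat -> fps) N p y :
  fps_mul a (fun q z => sum_f_R0 (fun k => B k q z) N) p y =
  sum_f_R0 (fun k => fps_mul a (B k) p y) N.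
Proof.
  unfold fps_mul. rewrite <- sum_f_R0_swap.
  apply sum_eq; intros i _. symmetry; apply sum_f_R0_scal_l.
Qed.

Lemma fps_pow_low (a : fps) y : a 0%nat y = 0 ->
  forall k p, (p < k)%nat -> fps_pow a k p y = 0.
Proof.
  intros H0 k. induction k as [|k IHk]; intros p Hp; [lia|].
  apply sum_eq_R0; intros [|i] Hi.
  - rewrite H0. ring.
  - rewrite IHk by lia. ring.
Qed.

Lemma fps_pow_opp (w a : fps) y : (forall i, w i y = - a i y) ->
  forall k p, fps_pow w k p y = (-1) ^ k * fps_pow a k p y.
Proof.
  intros H k. induction k as [|k IHk]; intros p; [simpl; ring|].
  simpl fps_pow. unfold fps_mul. rewrite <- sum_f_R0_scal_l.
  apply sum_eq; intros i Hi. rewrite H, IHk. simpl. ring.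
Qed.

Definition fps_inv_ratio (s : fps) : fps :=
  fun p z => if Nat.eqb p 0 then 0 else - s p z / s 0%nat z.

Lemma fps_inv_geom_sum (s : fps) m N y : (m <= N)%nat ->
  fps_inv s m y = / s 0%nat y * sum_f_R0 (fun k => fps_pow (fps_inv_ratio s) k m y) N.
Proof.
  intros HmN. rewrite <- (sum_f_R0_extend _ m N); [reflexivity | exact HmN |].
  intros k Hk. apply fps_pow_low; [reflexivity | lia].
Qed.

Lemma fps_mul_inv_r (s : fps) y : s 0%nat y <> 0 ->
  forall q, fps_mul s (fps_inv s) q y = fps_one q y.
Proof.
  intros Hs q.
  set (W := fps_inv_ratio s).
  set (G := fun m z => sum_f_R0 (fun k => fps_pow W k m z) q).
  (* s = s_0 (1 - W), and (1 - W) G telescopes to 1 - W^(q+1), which vanishes to order q *)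
  transitivity (fps_mul fps_one G q y - fps_mul W G q y).
  - unfold fps_mul. rewrite <- minus_sum. apply sum_eq; intros i Hi.
    rewrite (fps_inv_geom_sum s (q - i) q) by lia.
    unfold G, fps_one, W, fps_inv_ratio.
    destruct i; simpl; field; exact Hs.
  - rewrite fps_mul_one_l. unfold G at 2. rewrite fps_mul_sum_r.
    change (fun k => fps_mul W (fps_pow W k) q y) with (fun k => fps_pow W (S k) q y).
    unfold G. rewrite <- minus_sum, (sum_f_R0_telescope (fun k => fps_pow W k q y)).
    rewrite (fps_pow_low W y eq_refl (S q) q) by lia. simpl. ring.
Qed.

Lemma ex_derive_sum_f_R0 (g : nat -> R -> R) N x :
  (forall k, (k <= N)%nat -> ex_derive (g k) x) ->
  ex_derive (fun z => sum_f_R0 (fun k => g k z) N) x.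
Proof.
  induction N; intros H; simpl; [apply H; lia|].
  apply (ex_derive_plus (fun z => sum_f_R0 (fun k => g k z) N) (g (S N))).
  - apply IHN; intros; apply H; lia.
  - apply H; lia.
Qed.

Lemma Derive_sum_f_R0 (g : nat -> R -> R) N x :
  (forall k, (k <= N)%nat -> ex_derive (g k) x) ->
  Derive (fun z => sum_f_R0 (fun k => g k z) N) x = sum_f_R0 (fun k => Derive (g k) x) N.
Proof.
  induction N; intros H; simpl; [reflexivity|].
  rewrite Derive_plus, IHN; auto.
  apply ex_derive_sum_f_R0; auto.
Qed.

Section SeriesDerivative.
Variable x : R.

Lemma ex_derive_fps_mul (a b : fps) :
  (forall i, ex_derive (a i) x) -> (forall i, ex_derive (b i) x) ->
  forall p, ex_derive (fps_mul a b p) x.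
Proof.
  intros Ha Hb p. apply (ex_derive_sum_f_R0 (fun i z => a i z * b (p - i)%nat z)).
  intros k _. apply ex_derive_mult; auto.
Qed.

Lemma Derive_fps_mul (a b : fps) :
  (forall i, ex_derive (a i) x) -> (forall i, ex_derive (b i) x) ->
  forall p, Derive (fps_mul a b p) x = fps_mul (fps_D a) b p x + fps_mul a (fps_D b) p x.
Proof.
  intros Ha Hb p. unfold fps_mul at 1.
  rewrite (Derive_sum_f_R0 (fun i z => a i z * b (p - i)%nat z)).
  - unfold fps_mul, fps_D. rewrite <- plus_sum.
    apply sum_eq; intros i _. apply Derive_mult; auto.
  - intros k _. apply ex_derive_mult; auto.
Qed.

Lemma ex_derive_fps_pow (a : fps) :
  (forall i, ex_derive (a i) x) -> forall k p, ex_derive (fps_pow a k p) x.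
Proof.
  intros Ha k. induction k; intros p.
  - apply ex_derive_const.
  - apply ex_derive_fps_mul; auto.
Qed.

Lemma Derive_fps_pow (a : fps) : (forall i, ex_derive (a i) x) ->
  forall m p, Derive (fps_pow a (S m) p) x = INR (S m) * fps_mul (fps_D a) (fps_pow a m) p x.
Proof.
  intros Ha m. induction m as [|m IHm]; intros p.
  - change (fps_pow a 0) with fps_one. change (fps_pow a 1) with (fps_mul a fps_one).
    rewrite fps_mul_comm, fps_mul_one_l, Rmult_1_l.
    apply Derive_ext; intros y. rewrite fps_mul_comm. apply fps_mul_one_l.
  - change (fps_pow a (S (S m)) p) with (fps_mul a (fps_pow a (S m)) p).
    rewrite Derive_fps_mul by (auto; apply ex_derive_fps_pow; auto).
    rewrite (fps_mul_ext a a _ (fun q z => INR (S m) * fps_mul (fps_D a) (fps_pow a m) q z))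
      by (auto; intros i _; apply IHm).
    rewrite fps_mul_scal_r, fps_mul_left_comm, (S_INR (S m)). simpl fps_pow. ring.
Qed.

End SeriesDerivative.

Lemma Derive_fps_log1p (A : fps) x q : (forall i, ex_derive (A i) x) ->
  Derive (fps_log1p A (S q)) x =
  fps_mul (fps_D A) (fun m z => sum_f_R0 (fun k => (-1) ^ k * fps_pow A k m z) q) (S q) x.
Proof.
  intros HA. unfold fps_log1p.
  set (g := fun k z => match k with O => 0
                       | S k' => (-1) ^ k' / INR k * fps_pow A k (S q) z end).
  change (fun t => sum_f_R0 (fun k => match k with O => 0
             | S k' => (-1) ^ k' / INR k * fps_pow A k (S q) t end) (S q))
    with (fun z => sum_f_R0 (fun k => g k z) (S q)).
  rewrite Derive_sum_f_R0, sum_f_R0_shift, fps_mul_sum_r.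
  - unfold g at 1. rewrite Derive_const, Rplus_0_l.
    apply sum_eq; intros k _. unfold g.
    rewrite Derive_scal, Derive_fps_pow, fps_mul_scal_r by auto.
    field. apply not_0_INR. lia.
  - intros [|k] _; unfold g.
    + apply ex_derive_const.
    + apply ex_derive_scal, ex_derive_fps_pow; auto.
Qed.

Definition fps_tail_ratio (s : fps) : fps :=
  fun q y => if Nat.eqb q 0 then 0 else s q y / s 0%nat y.

Section LogDerivative.
Variables (s : fps) (x : R).
Hypothesis s_derivable : forall i, ex_derive (s i) x.
Hypothesis s0_neq0 : s 0%nat x <> 0.

Lemma ex_derive_fps_tail_ratio i : ex_derive (fps_tail_ratio s i) x.
Proof.
  unfold fps_tail_ratio; destruct i; simpl; [apply ex_derive_const|].
  apply (ex_derive_mult (s (S i)) (fun y => / s 0%nat y)); auto.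
  apply ex_derive_inv; auto.
Qed.

Lemma Derive_fps_tail_ratio j :
  Derive (fps_tail_ratio s (S j)) x =
  (Derive (s (S j)) x * s 0%nat x - s (S j) x * Derive (s 0%nat) x) / (s 0%nat x) ^ 2.
Proof.
  unfold fps_tail_ratio. simpl.
  change (fun y => s (S j) y / s 0%nat y) with (fun y => s (S j) y * / s 0%nat y).
  rewrite Derive_mult, Derive_inv; auto.
  - field. auto.
  - apply ex_derive_inv; auto.
Qed.

Lemma fps_mul_D_inv_log1p q : (1 <= q)%nat ->
  fps_mul (fps_D s) (fps_inv s) q x = Derive (fps_log1p (fps_tail_ratio s) q) x.
Proof.
  intros Hq. destruct q as [|q]; [lia|].
  set (A := fps_tail_ratio s).
  set (G := fun m z => sum_f_R0 (fun k => (-1) ^ k * fps_pow A k m z) q).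
  rewrite Derive_fps_log1p by apply ex_derive_fps_tail_ratio.
  fold A G.
  (* s' / s = s_0' / s_0 + A' / (1 + A), and the first term has no positive-degree part *)
  transitivity (Derive (s 0%nat) x / s 0%nat x * fps_mul s (fps_inv s) (S q) x
                + fps_mul (fps_D A) G (S q) x).
  2:{ rewrite fps_mul_inv_r by auto. unfold fps_one. simpl. ring. }
  assert (HG : forall m, (m <= q)%nat -> G m x = s 0%nat x * fps_inv s m x).
  { intros m Hm. rewrite (fps_inv_geom_sum s m q) by auto. unfold G.
    rewrite <- Rmult_assoc, Rinv_r, Rmult_1_l by auto.
    apply sum_eq; intros k _. symmetry. apply fps_pow_opp.
    intros [|i]; unfold A, fps_tail_ratio, fps_inv_ratio; simpl; field; auto. }
  unfold fps_mul at 1 2 3. rewrite <- sum_f_R0_scal_l, <- plus_sum.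
  apply sum_eq; intros [|j] Hj; unfold fps_D.
  - unfold A, fps_tail_ratio. simpl. rewrite Derive_const. field. auto.
  - unfold A. rewrite Derive_fps_tail_ratio, HG by (auto; lia). field. auto.
Qed.

End LogDerivative.

Lemma Derive_n_S (f : R -> R) k x : Derive_n f (S k) x = Derive_n (Derive f) k x.
Proof.
  revert x. induction k; intros x; [reflexivity|].
  apply Derive_ext, IHk.
Qed.

Lemma ex_derive_n_S_Derive (f : R -> R) k x :
  ex_derive_n f (S k) x -> ex_derive_n (Derive f) k x.
Proof.
  destruct k; [constructor|].
  apply ex_derive_ext; intros y. apply Derive_n_S.
Qed.

Section SmoothOn.
Variable U : R -> Prop.
Hypothesis U_open : open U.

Lemma locally_on_open x (P : R -> Prop) : U x -> (forall y, U y -> P y) -> locally x P.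
Proof. intros Hx H. exact (filter_imp U P H (U_open x Hx)). Qed.

Fixpoint derivable_n_on (k : nat) (f : R -> R) : Prop :=
  match k with
  | O => True
  | S k => (forall x, U x -> ex_derive f x) /\ derivable_n_on k (Derive f)
  end.

Definition smooth_on (f : R -> R) : Prop := forall k, derivable_n_on k f.

Lemma derivable_n_on_S_le k f : derivable_n_on (S k) f -> derivable_n_on k f.
Proof.
  revert f; induction k; intros f [Hf Hdf]; [constructor|].
  split; [exact Hf | apply IHk, Hdf].
Qed.

Lemma derivable_n_on_ext k f g :
  (forall x, U x -> f x = g x) -> derivable_n_on k f -> derivable_n_on k g.
Proof.
  revert f g; induction k; intros f g Hfg; [constructor|]. intros [Hf Hdf]. split.
  - intros x Hx. apply (ex_derive_ext_loc f); auto. apply locally_on_open; auto.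
  - apply (IHk (Derive f)); auto. intros x Hx.
    apply Derive_ext_loc, locally_on_open; auto.
Qed.

Lemma derivable_n_on_const k c : derivable_n_on k (fun _ => c).
Proof.
  revert c; induction k; intros c; [constructor|]. split.
  - intros; apply ex_derive_const.
  - apply (derivable_n_on_ext k (fun _ => 0)); auto.
    intros; symmetry; apply Derive_const.
Qed.

Lemma derivable_n_on_plus k f g : derivable_n_on k f -> derivable_n_on k g ->
  derivable_n_on k (fun x => f x + g x).
Proof.
  revert f g; induction k; intros f g; [constructor|]. intros [Hf Hdf] [Hg Hdg]. split.
  - intros x Hx. apply (ex_derive_plus f g); auto.
  - apply (derivable_n_on_ext k (fun x => Derive f x + Derive g x)); auto.
    intros x Hx. symmetry. apply Derive_plus; auto.
Qed.

Lemma derivable_n_on_mult k f g : derivable_n_on k f -> derivable_n_on k g ->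
  derivable_n_on k (fun x => f x * g x).
Proof.
  revert f g; induction k; intros f g; [constructor|]. intros Hf Hg.
  pose proof (derivable_n_on_S_le _ _ Hf) as Hf'.
  pose proof (derivable_n_on_S_le _ _ Hg) as Hg'.
  destruct Hf as [Hf Hdf], Hg as [Hg Hdg]. split.
  - intros x Hx. apply ex_derive_mult; auto.
  - apply (derivable_n_on_ext k (fun x => Derive f x * g x + f x * Derive g x)).
    + intros x Hx. symmetry. apply Derive_mult; auto.
    + apply derivable_n_on_plus; auto.
Qed.

Lemma derivable_n_on_inv k f : (forall x, U x -> f x <> 0) -> derivable_n_on k f ->
  derivable_n_on k (fun x => / f x).
Proof.
  revert f; induction k; intros f Hnz; [constructor|]. intros Hf.
  pose proof (derivable_n_on_S_le _ _ Hf) as Hf'. destruct Hf as [Hf Hdf]. split.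
  - intros x Hx. apply ex_derive_inv; auto.
  - apply (derivable_n_on_ext k (fun x => (-1) * (Derive f x * (/ f x * / f x)))).
    + intros x Hx. rewrite Derive_inv by auto. field. auto.
    + apply derivable_n_on_mult; [apply derivable_n_on_const|].
      apply derivable_n_on_mult; auto. apply derivable_n_on_mult; auto.
Qed.

Lemma smooth_on_ex_derive_n f : (forall k x, U x -> ex_derive_n f k x) -> smooth_on f.
Proof.
  intros Hf k. revert f Hf. induction k; intros f Hf; [constructor|]. split.
  - intros x Hx. exact (Hf 1%nat x Hx).
  - apply IHk. intros j x Hx. apply ex_derive_n_S_Derive, Hf, Hx.
Qed.

Lemma smooth_on_ex_derive f x : smooth_on f -> U x -> ex_derive f x.
Proof. intros Hf. apply (Hf 1%nat). Qed.

Lemma smooth_on_Derive f : smooth_on f -> smooth_on (Derive f).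
Proof. intros Hf k. apply (Hf (S k)). Qed.

Lemma smooth_on_ext f g : (forall x, U x -> f x = g x) -> smooth_on f -> smooth_on g.
Proof. intros Hfg Hf k. apply (derivable_n_on_ext k f); auto. Qed.

Lemma smooth_on_const c : smooth_on (fun _ => c).
Proof. intros k. apply derivable_n_on_const. Qed.

Lemma smooth_on_plus f g : smooth_on f -> smooth_on g -> smooth_on (fun x => f x + g x).
Proof. intros Hf Hg k. apply derivable_n_on_plus; auto. Qed.

Lemma smooth_on_mult f g : smooth_on f -> smooth_on g -> smooth_on (fun x => f x * g x).
Proof. intros Hf Hg k. apply derivable_n_on_mult; auto. Qed.

Lemma smooth_on_inv f : (forall x, U x -> f x <> 0) -> smooth_on f ->
  smooth_on (fun x => / f x).
Proof. intros Hnz Hf k. apply derivable_n_on_inv; auto. Qed.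

Lemma smooth_on_sum_f_R0 (g : nat -> R -> R) N :
  (forall k, (k <= N)%nat -> smooth_on (g k)) ->
  smooth_on (fun z => sum_f_R0 (fun k => g k z) N).
Proof.
  induction N; intros H; [apply H; lia|].
  apply (smooth_on_plus (fun z => sum_f_R0 (fun k => g k z) N) (g (S N))).
  - apply IHN; intros; apply H; lia.
  - apply H; lia.
Qed.

Lemma smooth_on_sum_f_R0_weighted (c : nat -> R) (g : nat -> R -> R) N :
  (forall k, (k <= N)%nat -> c k = 0 \/ smooth_on (g k)) ->
  smooth_on (fun z => sum_f_R0 (fun k => c k * g k z) N).
Proof.
  intros H. apply (smooth_on_sum_f_R0 (fun k z => c k * g k z)). intros k Hk.
  destruct (H k Hk) as [Hc|Hg].
  - apply (smooth_on_ext (fun _ => 0)); [intros; rewrite Hc; ring | apply smooth_on_const].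
  - apply smooth_on_mult; [apply smooth_on_const | exact Hg].
Qed.

Definition smooth_fps_on (a : fps) : Prop := forall p, smooth_on (a p).

Lemma smooth_fps_on_mul a b : smooth_fps_on a -> smooth_fps_on b ->
  smooth_fps_on (fps_mul a b).
Proof.
  intros Ha Hb p.
  apply (smooth_on_sum_f_R0 (fun i t => a i t * b (p - i)%nat t)); intros k _.
  apply smooth_on_mult; auto.
Qed.

Lemma smooth_fps_on_pow a : smooth_fps_on a -> forall k, smooth_fps_on (fps_pow a k).
Proof.
  intros Ha k. induction k; [intros p; exact (smooth_on_const _)|].
  apply smooth_fps_on_mul; auto.
Qed.

Lemma smooth_fps_on_D a : smooth_fps_on a -> smooth_fps_on (fps_D a).
Proof. intros Ha p. apply smooth_on_Derive, Ha. Qed.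

Lemma smooth_fps_on_inv s : smooth_fps_on s -> (forall x, U x -> s 0%nat x <> 0) ->
  smooth_fps_on (fps_inv s).
Proof.
  intros Hs Hnz m.
  assert (HW : smooth_fps_on (fps_inv_ratio s)).
  { intros [|p]; [exact (smooth_on_const 0)|].
    apply (smooth_on_ext (fun z => (-1) * s (S p) z * / s 0%nat z)).
    - intros x Hx. unfold fps_inv_ratio. simpl. field. auto.
    - apply smooth_on_mult; [apply smooth_on_mult; [apply smooth_on_const | apply Hs]|].
      apply smooth_on_inv; auto. }
  apply (smooth_on_ext (fun t => / s 0%nat t *
    sum_f_R0 (fun k => fps_pow (fps_inv_ratio s) k m t) m)); [reflexivity|].
  apply smooth_on_mult; [apply smooth_on_inv; auto|].
  apply (smooth_on_sum_f_R0 (fun k t => fps_pow (fps_inv_ratio s) k m t)).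
  intros k _. apply smooth_fps_on_pow, HW.
Qed.

Lemma smooth_fps_on_DDlog L : smooth_fps_on L -> (forall x, U x -> L 1%nat x <> 0) ->
  smooth_fps_on (fps_DDlog L).
Proof.
  intros HL Hnz. apply smooth_fps_on_D, smooth_fps_on_mul.
  - apply smooth_fps_on_D. intros p; apply HL.
  - apply smooth_fps_on_inv; auto. intros p; apply HL.
Qed.

End SmoothOn.

Lemma L_ser_S F n : L_ser F (S n) = L_step F (S n) (L_hist F n).
Proof.
  unfold L_ser. cbn [L_hist].
  replace (Nat.leb (S n) n) with false by (symmetry; apply Nat.leb_gt; lia).
  reflexivity.
Qed.

Lemma L_hist_L_ser F n k : (1 <= k <= n)%nat -> L_hist F n k = L_ser F k.
Proof.
  revert k. induction n; intros k Hk; [lia|].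
  simpl. destruct (Nat.leb k n) eqn:E.
  - apply Nat.leb_le in E. apply IHn. lia.
  - apply Nat.leb_gt in E. replace k with (S n) by lia. symmetry. apply L_ser_S.
Qed.

(* The j = 0 summand is multiplied by 0, so it may refer to L_ser F n itself. *)
Lemma L_ser_unfold F n p x : (1 <= n)%nat ->
  L_ser F n p x = (if Nat.eqb p 1 then INR n * Derive_n F 2 x else 0) +
    sum_f_R0 (fun j => INR j * match p with
                               | S (S q) => fps_DDlog (L_ser F (n - j)) q x
                               | _ => 0
                               end) (n - 1).
Proof.
  intros Hn. destruct n as [|n]; [lia|]. rewrite L_ser_S. unfold L_step. f_equal.
  apply sum_eq; intros [|j] Hj.
  - simpl. ring.
  - rewrite L_hist_L_ser by lia. reflexivity.
Qed.

Lemma L_ser_1 F n x : (1 <= n)%nat -> L_ser F n 1%nat x = INR n * Derive_n F 2 x.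
Proof.
  intros Hn. rewrite L_ser_unfold by auto. simpl.
  rewrite sum_eq_R0 by (intros; ring). ring.
Qed.

Lemma L_ser_SS F n q x : (1 <= n)%nat ->
  L_ser F n (S (S q)) x =
  sum_f_R0 (fun j => INR j * fps_DDlog (L_ser F (n - j)) q x) (n - 1).
Proof. intros Hn. rewrite L_ser_unfold by auto. simpl. ring. Qed.

Lemma fps_mul_D_inv_0 (s : fps) x :
  fps_mul (fps_D s) (fps_inv s) 0%nat x = Derive (s 0%nat) x / s 0%nat x.
Proof. unfold fps_mul, fps_inv, fps_D. simpl. unfold fps_one, Rdiv. simpl. ring. Qed.

Lemma Derive_ln_comp (g : R -> R) x : ex_derive g x -> 0 < g x ->
  Derive (fun s => ln (g s)) x = Derive g x / g x.
Proof.
  intros Hg Hpos. rewrite (Derive_comp ln g x); auto.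
  - rewrite (is_derive_unique ln (g x) (/ g x)) by (apply is_derive_ln; auto).
    unfold Rdiv. ring.
  - exists (/ g x). apply is_derive_ln; auto.
Qed.

Lemma sum_f_R0_INR m : sum_f_R0 INR m = INR m * (INR m + 1) / 2.
Proof. induction m; [simpl; field|]. rewrite tech5, IHm, S_INR. field. Qed.

Lemma sum_f_R0_INR_sqr m :
  sum_f_R0 (fun j => INR j * INR j) m = INR m * (INR m + 1) * (2 * INR m + 1) / 6.
Proof. induction m; [simpl; field|]. rewrite tech5, IHm, S_INR. field. Qed.

Lemma sum_f_R0_INR_mul_pred_half m :
  sum_f_R0 (fun j => INR j * ((INR (S m - j) - 1) / 2)) m =
  1 / 12 * INR (S m) * (INR (S m) - 1) * (INR (S m) - 2).
Proof.
  rewrite (sum_eq _ (fun j => / 2 * (INR m * INR j - INR j * INR j))).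
  - rewrite sum_f_R0_scal_l, minus_sum, sum_f_R0_scal_l.
    rewrite sum_f_R0_INR, sum_f_R0_INR_sqr, S_INR. field.
  - intros j Hj. rewrite minus_INR, S_INR by lia. field.
Qed.

Definition ddlog_F2 (F : R -> R) (x : R) : R :=
  (Derive_n F 2 x * Derive_n F 4 x - (Derive_n F 3 x) ^ 2) / (Derive_n F 2 x) ^ 2.

Definition ddlog_F2_div_F2 (F : R -> R) (x : R) : R :=
  (Derive_n F 2 x * Derive_n F 4 x - (Derive_n F 3 x) ^ 2) / (Derive_n F 2 x) ^ 3.

Lemma m_coef_1 F n s : m_coef F n 1 s = l_coef F n 2 s / l_coef F n 1 s.
Proof.
  unfold m_coef, fps_log1p. simpl. unfold fps_mul, fps_one. simpl.
  replace (1 / 1) with 1 by field. ring.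
Qed.

Section Hierarchy.
Variable U : R -> Prop.
Hypothesis U_open : open U.
Variable F : R -> R.
Hypothesis F_derivable : forall k x, U x -> ex_derive_n F k x.
Hypothesis F2_pos : forall x, U x -> 0 < Derive_n F 2 x.

Lemma smooth_on_Derive_n_F k : smooth_on U (Derive_n F k).
Proof.
  induction k.
  - apply smooth_on_ex_derive_n. exact F_derivable.
  - apply (smooth_on_Derive U), IHk.
Qed.

Lemma L_ser_1_pos n x : (1 <= n)%nat -> U x -> 0 < L_ser F n 1%nat x.
Proof.
  intros Hn Hx. rewrite L_ser_1 by auto.
  apply Rmult_lt_0_compat; [apply lt_0_INR; lia | auto].
Qed.

Lemma smooth_fps_on_L_ser n : (1 <= n)%nat -> smooth_fps_on U (L_ser F n).
Proof.
  induction n as [n IHn] using (well_founded_induction Wf_nat.lt_wf). intros Hn p.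
  apply (smooth_on_ext U U_open (fun x =>
    (if Nat.eqb p 1 then INR n * Derive_n F 2 x else 0) +
    sum_f_R0 (fun j => INR j * match p with
                               | S (S q) => fps_DDlog (L_ser F (n - j)) q x
                               | _ => 0
                               end) (n - 1))).
  { intros x _. symmetry. apply L_ser_unfold, Hn. }
  apply (smooth_on_plus U U_open).
  - destruct (Nat.eqb p 1); [|apply (smooth_on_const U U_open)].
    apply (smooth_on_mult U U_open);
      [apply (smooth_on_const U U_open) | apply smooth_on_Derive_n_F].
  - apply (smooth_on_sum_f_R0_weighted U U_open INR). intros [|j] Hj; [left; reflexivity|].
    right. destruct p as [|[|q]]; try apply (smooth_on_const U U_open).
    apply (smooth_fps_on_DDlog U U_open); [apply IHn; lia|].
    intros x Hx. apply Rgt_not_eq, L_ser_1_pos; auto; lia.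
Qed.

Lemma ex_derive_L_ser n p x : (1 <= n)%nat -> U x -> ex_derive (L_ser F n p) x.
Proof.
  intros Hn Hx. apply (smooth_on_ex_derive U); [apply smooth_fps_on_L_ser | ]; auto.
Qed.

Lemma fps_DDlog_L_ser_0 n t : (1 <= n)%nat -> U t ->
  fps_DDlog (L_ser F n) 0%nat t = Derive_n (fun s => ln (L_ser F n 1%nat s)) 2 t.
Proof.
  intros Hn Ht. apply Derive_ext_loc, (locally_on_open U U_open); auto. intros y Hy.
  rewrite fps_mul_D_inv_0, Derive_ln_comp; auto.
  - apply ex_derive_L_ser; auto.
  - apply L_ser_1_pos; auto.
Qed.

Lemma fps_DDlog_L_ser_pos n q t : (1 <= n)%nat -> (1 <= q)%nat -> U t ->
  fps_DDlog (L_ser F n) q t = Derive_n (m_coef F n q) 2 t.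
Proof.
  intros Hn Hq Ht. apply Derive_ext_loc, (locally_on_open U U_open); auto. intros y Hy.
  apply fps_mul_D_inv_log1p; auto.
  - intros i. apply ex_derive_L_ser; auto.
  - apply Rgt_not_eq, L_ser_1_pos; auto.
Qed.

Lemma Derive_n_ln_L_ser_1 n t : (1 <= n)%nat -> U t ->
  Derive_n (fun s => ln (L_ser F n 1%nat s)) 2 t = ddlog_F2 F t.
Proof.
  intros Hn Ht.
  assert (Hn0 : INR n <> 0) by (apply not_0_INR; lia).
  assert (HF2 : Derive_n F 2 t <> 0) by (apply Rgt_not_eq, F2_pos, Ht).
  change (Derive_n ?f 2 t) with (Derive (Derive f) t).
  rewrite (Derive_ext_loc _ (fun y => Derive_n F 3 y * / Derive_n F 2 y)).
  - rewrite Derive_mult, Derive_inv.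
    + unfold ddlog_F2. simpl. field. exact HF2.
    + exact (F_derivable 3%nat t Ht).
    + exact HF2.
    + exact (F_derivable 4%nat t Ht).
    + apply ex_derive_inv; [exact (F_derivable 3%nat t Ht) | exact HF2].
  - apply (locally_on_open U U_open); auto. intros y Hy.
    assert (HF2y := F2_pos y Hy).
    rewrite Derive_ln_comp by (auto using ex_derive_L_ser, L_ser_1_pos).
    rewrite (Derive_ext_loc _ (fun s => INR n * Derive_n F 2 s)).
    + rewrite Derive_scal, L_ser_1 by auto.
      change (Derive (Derive_n F 2) y) with (Derive_n F 3 y). field. lra.
    + apply (locally_on_open U U_open); auto. intros; apply L_ser_1; auto.
Qed.

Lemma L_ser_2_hierarchy n t : (1 <= n)%nat -> U t ->
  L_ser F n 2%nat t =
  sum_f_R0 (fun j => INR j * Derive_n (fun s => ln (L_ser F (n - j) 1%nat s)) 2 t) (n - 1).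
Proof.
  intros Hn Ht. rewrite L_ser_SS by exact Hn.
  apply sum_eq; intros [|j] Hj; [simpl; ring|].
  rewrite fps_DDlog_L_ser_0 by (auto; lia). reflexivity.
Qed.

Lemma L_ser_hierarchy n q t : (1 <= n)%nat -> (1 <= q)%nat -> U t ->
  L_ser F n (S (S q)) t =
  sum_f_R0 (fun j => INR j * Derive_n (m_coef F (n - j) q) 2 t) (n - 1).
Proof.
  intros Hn Hq Ht. rewrite L_ser_SS by exact Hn.
  apply sum_eq; intros [|j] Hj; [simpl; ring|].
  rewrite fps_DDlog_L_ser_pos by (auto; lia). reflexivity.
Qed.

Lemma L_ser_2 n t : (1 <= n)%nat -> U t ->
  L_ser F n 2%nat t = 1 / 2 * INR n * (INR n - 1) * ddlog_F2 F t.
Proof.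
  intros Hn Ht. rewrite L_ser_2_hierarchy by auto.
  rewrite (sum_eq _ (fun j => INR j * ddlog_F2 F t)).
  - rewrite sum_f_R0_scal_r, sum_f_R0_INR. destruct n as [|m]; [lia|].
    replace (S m - 1)%nat with m by lia. rewrite S_INR. field.
  - intros j Hj. rewrite Derive_n_ln_L_ser_1 by (auto; lia). reflexivity.
Qed.

Lemma Derive_n_m_coef_1 n t : (1 <= n)%nat -> U t ->
  Derive_n (m_coef F n 1) 2 t = (INR n - 1) / 2 * Derive_n (ddlog_F2_div_F2 F) 2 t.
Proof.
  intros Hn Ht. rewrite <- Derive_n_scal_l.
  apply Derive_n_ext_loc, (locally_on_open U U_open); auto. intros y Hy.
  unfold l_coef. rewrite m_coef_1, L_ser_2, L_ser_1 by auto.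
  assert (Hn0 : INR n <> 0) by (apply not_0_INR; lia).
  assert (HF2 := F2_pos y Hy).
  unfold ddlog_F2, ddlog_F2_div_F2. field. split; lra.
Qed.

Lemma L_ser_3 n t : (1 <= n)%nat -> U t ->
  L_ser F n 3%nat t =
  1 / 12 * INR n * (INR n - 1) * (INR n - 2) * Derive_n (ddlog_F2_div_F2 F) 2 t.
Proof.
  intros Hn Ht. rewrite L_ser_hierarchy by (auto; lia).
  rewrite (sum_eq _ (fun j => INR j * ((INR (n - j) - 1) / 2) *
                              Derive_n (ddlog_F2_div_F2 F) 2 t)).
  - rewrite sum_f_R0_scal_r. destruct n as [|m]; [lia|].
    replace (S m - 1)%nat with m by lia. rewrite sum_f_R0_INR_mul_pred_half. reflexivity.
  - intros [|j] Hj; [simpl; ring|].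
    rewrite Derive_n_m_coef_1 by (auto; lia). ring.
Qed.

End Hierarchy.

Theorem mainTheorem5 (F : R -> R) (a b : Rbar) :
  Rbar_lt a b ->
  (forall (k : nat) (t : R), Rbar_lt a t -> Rbar_lt t b -> ex_derive_n F k t) ->
  (forall t : R, Rbar_lt a t -> Rbar_lt t b -> 0 < Derive_n F 2 t) ->
  forall (n : nat), (1 <= n)%nat ->
  forall t : R, Rbar_lt a t -> Rbar_lt t b ->
    l_coef F n 1 t = INR n * Derive_n F 2 t
    /\ l_coef F n 2 t =
         sum_f_R0 (fun j => INR j *
           Derive_n (fun s => ln (l_coef F (n - j) 1 s)) 2 t) (n - 1)
    /\ (forall p : nat, (3 <= p)%nat ->
         l_coef F n p t =
           sum_f_R0 (fun j => INR j *
             Derive_n (m_coef F (n - j) (p - 2)) 2 t) (n - 1))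
    /\ l_coef F n 2 t =
         1 / 2 * INR n * (INR n - 1) *
         ((Derive_n F 2 t * Derive_n F 4 t - (Derive_n F 3 t) ^ 2)
            / (Derive_n F 2 t) ^ 2)
    /\ l_coef F n 3 t =
         1 / 12 * INR n * (INR n - 1) * (INR n - 2) *
         Derive_n (fun s => (Derive_n F 2 s * Derive_n F 4 s - (Derive_n F 3 s) ^ 2)
                              / (Derive_n F 2 s) ^ 3) 2 t.
Proof.
  intros _ HF HF2 n Hn t Hat Htb.
  set (U := fun x : R => Rbar_lt a x /\ Rbar_lt x b).
  assert (U_open : open U) by (apply open_and; [apply open_Rbar_gt | apply open_Rbar_lt]).
  assert (F_derivable : forall k x, U x -> ex_derive_n F k x) by (intros k x []; auto).
  assert (F2_pos : forall x, U x -> 0 < Derive_n F 2 x) by (intros x []; auto).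
  assert (Ht : U t) by (split; auto).
  unfold l_coef. split; [|split; [|split; [|split]]].
  - apply L_ser_1, Hn.
  - apply (L_ser_2_hierarchy U U_open F F_derivable F2_pos); auto.
  - intros [|[|[|q]]] Hp; try lia.
    replace (S (S (S q)) - 2)%nat with (S q) by lia.
    apply (L_ser_hierarchy U U_open F F_derivable F2_pos); auto; lia.
  - apply (L_ser_2 U U_open F F_derivable F2_pos); auto.
  - apply (L_ser_3 U U_open F F_derivable F2_pos); auto.
Qed.
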